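(* Let $\bm G\in\{0,1\}^{n\times k}$ be a partition indicator matrix, $\bm\Omega\in[0,1]^{k\times k}$ symmetric, $\bm{\mathcal A}=\bm G\bm\Omega\bm G^\top$ of rank $k$ with all entries of $\bm{\mathcal A}\bm1$ positive, and $\bm{\mathcal L}=\operatorname{diag}(\bm{\mathcal A}\bm1)^{-1/2}\bm{\mathcal A}\operatorname{diag}(\bm{\mathcal A}\bm1)^{-1/2}$. Let $\bm v_1,\ldots,\bm v_k$ be orthonormal eigenvectors of $\bm{\mathcal L}$ corresponding to its $k$ nonzero eigenvalues. Then each column of $\bm G$ is a linear combination of $\bm v_1,\ldots,\bm v_k$.
   Context: A partition indicator matrix $\bm G$ has exactly one entry $1$ in each row and each column nonzero. $\bm1$ is the all-ones vector and $\operatorname{diag}(\bm x)$ the diagonal matrix with diagonal $\bm x$. *)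

From HB Require Import structures.
From mathcomp Require Import all_boot all_order all_algebra.
Set Implicit Arguments. Unset Strict Implicit. Unset Printing Implicit Defensive.
Import Order.TTheory GRing.Theory Num.Theory.
Local Open Scope ring_scope.

Definition partition_indicator (R : nzRingType) (n k : nat) (G : 'M[R]_(n, k)) : Prop :=
  (forall i j, G i j = 0 \/ G i j = 1) /\
  (forall i, exists! j, G i j = 1) /\
  (forall j, exists i, G i j != 0).

Definition degvec (R : nzRingType) (n : nat) (A : 'M[R]_n) : 'cV[R]_n :=
  A *m const_mx 1.

Definition normalized_adj (R : rcfType) (n : nat) (A : 'M[R]_n) : 'M[R]_n :=
  let D := diag_mx (\row_i (Num.sqrt (degvec A i ord0))^-1) in
  D *m A *m D.

(** Write [D] for the diagonal scaling of [L = D A D] and [w] for the block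
    degrees [Omega G^T 1].  Since the degree of a vertex only depends on its
    block, [D G = G E] for the invertible diagonal matrix [E = diag(w)^{-1/2}];
    hence [G] and [D G] have the same column space.  An eigenvector of [L] for
    a nonzero eigenvalue lies in the column space of [L = (D G) Omega (D G)^T],
    hence in that of [D G], which has dimension at most [k].  The [k]
    orthonormal eigenvectors span a [k]-dimensional space, so they span the
    column space of [D G], which contains every column of [G]. *)

From HB Require Import structures.
From mathcomp Require Import all_boot all_order all_algebra.
Set Implicit Arguments. Unset Strict Implicit. Unset Printing Implicit Defensive.
Import Order.TTheory GRing.Theory Num.Theory.
Local Open Scope ring_scope.

Section PartitionIndicator.

Variables (R : nzRingType) (n k : nat) (G : 'M[R]_(n, k)).
Hypothesis G_part : partition_indicator G.

Lemma partition_indicator_eq1 i j : G i j != 0 -> G i j = 1.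
Proof. by case: G_part => G01 _; case: (G01 i j) => ->; rewrite ?eqxx. Qed.

Lemma partition_indicator_block_nonempty j : exists i, G i j = 1.
Proof.
by case: G_part => _ [_ /(_ j) [i /partition_indicator_eq1]]; exists i.
Qed.

Lemma partition_indicator_mulmxE p (M : 'M[R]_(k, p)) i j c :
  G i j = 1 -> (G *m M) i c = M j c.
Proof.
move=> Gij; rewrite mxE (bigD1 j) //= Gij mul1r big1 ?addr0 // => j' j'j.
have [->|/partition_indicator_eq1 Gij'] := eqVneq (G i j') 0; first by rewrite mul0r.
case: G_part => _ [/(_ i) [j0 [_ j0_uniq]] _].
by move: j'j; rewrite -(j0_uniq _ Gij) -(j0_uniq _ Gij') eqxx.
Qed.

Lemma degvec_partition_indicator (B : 'M[R]_(k, n)) i j :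
  G i j = 1 -> degvec (G *m B) i ord0 = (B *m const_mx 1 : 'cV_k) j ord0.
Proof. by move=> Gij; rewrite /degvec -mulmxA (partition_indicator_mulmxE _ _ Gij). Qed.

End PartitionIndicator.

Lemma diag_mx_mul_blockwise (R : comPzRingType) (n k : nat)
    (G : 'M[R]_(n, k)) (d : 'rV[R]_n) (c : 'rV[R]_k) :
  (forall i j, G i j != 0 -> d 0 i = c 0 j) ->
  diag_mx d *m G = G *m diag_mx c.
Proof.
move=> dc; apply/matrixP => i j; rewrite mul_diag_mx mul_mx_diag !mxE mulrC.
by have [->|/dc ->] := eqVneq (G i j) 0; rewrite ?mul0r ?mulr0.
Qed.

Lemma unitmx_diag (F : fieldType) (n : nat) (d : 'rV[F]_n) :
  (forall i, d 0 i != 0) -> diag_mx d \in unitmx.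
Proof.
by move=> d_neq0; rewrite unitmxE det_diag unitfE; apply/prodf_neq0.
Qed.

Lemma partition_indicator_tr_sub_scaled (R : rcfType) (n k : nat)
    (G : 'M[R]_(n, k)) (B : 'M[R]_(k, n)) :
  partition_indicator G -> (forall i, 0 < degvec (G *m B) i ord0) ->
  (G^T <= G^T *m diag_mx (\row_i (Num.sqrt (degvec (G *m B) i ord0))^-1))%MS.
Proof.
move=> G_part deg_gt0.
pose w : 'cV[R]_k := B *m const_mx 1.
pose E := diag_mx (\row_l (Num.sqrt (w l ord0))^-1).
have E_unit : E \in unitmx.
  apply: unitmx_diag => l; rewrite mxE invr_eq0 gt_eqF // sqrtr_gt0.
  have [i Gil] := partition_indicator_block_nonempty G_part l.
  by rewrite -(degvec_partition_indicator G_part _ Gil).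
have -> : G^T *m diag_mx (\row_i (Num.sqrt (degvec (G *m B) i ord0))^-1) = E *m G^T.
  rewrite -tr_diag_mx -[E]tr_diag_mx -!trmx_mul; congr _^T.
  apply: diag_mx_mul_blockwise => i l /(partition_indicator_eq1 G_part) Gil.
  by rewrite mxE [RHS]mxE (degvec_partition_indicator G_part _ Gil).
by apply/submxP; exists (invmx E); rewrite mulmxA mulVmx ?mul1mx.
Qed.

Lemma eigenvectors_sub_image (F : fieldType) (n k : nat)
    (L : 'M[F]_n) (V : 'M[F]_(n, k)) (lam : 'rV[F]_k) :
  (forall j, lam 0 j != 0 /\ L *m col j V = lam 0 j *: col j V) ->
  (V^T <= L^T)%MS.
Proof.
move=> eig.
have LV : L *m V = V *m diag_mx lam.
  apply/matrixP => a b; have [_ /(congr1 (fun M : 'cV_n => M a 0))] := eig b.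
  rewrite mul_mx_diag !mxE [RHS]mulrC => <-.
  by apply: eq_bigr => i _; rewrite mxE.
have -> : V = L *m (V *m diag_mx (\row_j (lam 0 j)^-1)).
  rewrite mulmxA LV -mulmxA mulmx_diag.
  rewrite (_ : \row_j _ = const_mx 1) ?diag_const_mx ?mulmx1 //.
  by apply/rowP => j; rewrite !mxE mulfV //; case: (eig j).
by rewrite trmx_mul submxMl.
Qed.

Theorem corollaryA3 (R : rcfType) (n k : nat)
  (G : 'M[R]_(n, k)) (Omega : 'M[R]_k) (V : 'M[R]_(n, k)) (lam : 'rV[R]_k) :
  partition_indicator G ->
  (forall a b, 0 <= Omega a b <= 1) ->
  Omega^T = Omega ->
  \rank (G *m Omega *m G^T) = k ->
  (forall i, 0 < degvec (G *m Omega *m G^T) i ord0) ->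
  (* the columns of V are orthonormal *)
  V^T *m V = 1%:M ->
  (* column j of V is an eigenvector of L for the nonzero eigenvalue lam j *)
  (forall j, lam ord0 j != 0 /\
     normalized_adj (G *m Omega *m G^T) *m col j V = lam ord0 j *: col j V) ->
  forall j : 'I_k, exists c : 'cV[R]_k, col j G = V *m c.
Proof.
move=> G_part _ _ _ deg_gt0 VV eig j.
have := partition_indicator_tr_sub_scaled (B := Omega *m G^T) G_part.
rewrite [G *m _]mulmxA => /(_ deg_gt0); set D := diag_mx _ => G_sub_DG.
have V_sub_DG : (V^T <= G^T *m D)%MS.
  apply: submx_trans (eigenvectors_sub_image eig) _.
  by rewrite /normalized_adj !trmx_mul tr_diag_mx !mulmxA -mulmxA submxMl.
have DG_sub_V : (G^T *m D <= V^T)%MS.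
  have /eqP V_rank : row_full V by apply/row_fullP; exists V^T.
  by rewrite -(geq_leqif (mxrank_leqif_sup V_sub_DG)) mxrank_tr V_rank rank_leq_row.
have [C GC] := submxP (submx_trans G_sub_DG DG_sub_V).
by exists (col j C^T); rewrite -[G]trmxK GC trmx_mul trmxK !colE mulmxA.
Qed.
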